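(* Fix $c\in\{1,\dots,K-1\}$ and suppose $$\bar p_c(\bm x,\bar Y)=\binom{K-1}{c}^{-1}\sum_{y\notin \bar Y}p(\bm x,y)\qquad(\bm x\in\mathcal X,\ \bar Y\in\overline{\mathcal Y}_c).$$ For $\gamma\in[0,1]$ define $$R^u_c(\bm g)=\mathbb E_{\bar p_c(\bm x,\bar Y)}\Big[(1-\gamma)\mathcal L(\bm g(\bm x))-\frac{K-1}{c}\sum_{y\in\bar Y}\ell(\bm g(\bm x),y)\Big]+\gamma\,\mathbb E_{p(\bm x)}\big[\mathcal L(\bm g(\bm x))\big].$$ Then for any loss $\ell$ and decision function $\bm g$ (with finite expectations), $R^u_c(\bm g)=R(\bm g)$.
   Context: Let $K\ge 2$, $\mathcal X\subseteq\mathbb R^d$ the feature space and $\mathcal Y=\{1,\dots,K\}$ the label space. Let $p(\bm x,y)$ be a joint density on $\mathcal X\times\mathcal Y$ with marginal density $p(\bm x)$. For $c\in\{1,\dots,K-1\}$, $\overline{\mathcal Y}_c$ denotes the collection of all $c$-element subsets of $\{1,\dots,K\}$, and $\bar p_c(\bm x,\bar Y)$ is a density on $\mathcal X\times\overline{\mathcal Y}_c$. A decision function is a map $\bm g:\mathcal X\to\mathbb R^K$, a loss is a function $\ell:\mathbb R^K\times\mathcal Y\to[0,\infty)$, the classification risk is $R(\bm g)=\mathbb E_{p(\bm x,y)}[\ell(\bm g(\bm x),y)]$, and the cumulative loss is $\mathcal L(\bm g(\bm x))=\sum_{y=1}^K\ell(\bm g(\bm x),y)$. *)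

From HB Require Import structures.
From mathcomp Require Import all_boot all_order all_algebra.
Set Implicit Arguments. Unset Strict Implicit. Unset Printing Implicit Defensive.
Import Order.TTheory GRing.Theory Num.Theory.
Local Open Scope ring_scope.

(* An abstract integral over the feature space X (standing in for the Lebesgue
   integral against dx on X ⊆ R^d): a linear functional on a class of
   "integrable" functions which is closed under linear combinations. *)
Definition linear_integral (X : Type) (R : realFieldType)
  (integrable : (X -> R) -> Prop) (I : (X -> R) -> R) : Prop :=
  [/\ (forall f h, integrable f -> integrable h ->
          integrable (fun x => f x + h x)),
      (forall (a : R) f, integrable f -> integrable (fun x => a * f x)),
      (forall f h, integrable f -> integrable h ->
          I (fun x => f x + h x) = I f + I h) &
      (forall (a : R) f, integrable f -> I (fun x => a * f x) = a * I f)].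

(* Labels are 'I_K = {0,...,K-1} (standing for {1,...,K}). *)

Definition marginal (X : Type) (R : realFieldType) (K : nat)
  (p : X -> 'I_K -> R) (x : X) : R := \sum_(y < K) p x y.

Definition cum_loss (R : realFieldType) (K : nat)
  (ell : 'rV[R]_K -> 'I_K -> R) (v : 'rV[R]_K) : R := \sum_(y < K) ell v y.

Definition E_joint (X : Type) (R : realFieldType) (K : nat)
  (I : (X -> R) -> R) (p : X -> 'I_K -> R) (f : X -> 'I_K -> R) : R :=
  I (fun x => \sum_(y < K) p x y * f x y).

Definition E_marg (X : Type) (R : realFieldType) (K : nat)
  (I : (X -> R) -> R) (p : X -> 'I_K -> R) (h : X -> R) : R :=
  I (fun x => marginal p x * h x).

Definition E_comp (X : Type) (R : realFieldType) (K c : nat)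
  (I : (X -> R) -> R) (pbar : X -> {set 'I_K} -> R)
  (f : X -> {set 'I_K} -> R) : R :=
  I (fun x => \sum_(Y : {set 'I_K} | #|Y| == c) pbar x Y * f x Y).

Definition risk (X : Type) (R : realFieldType) (K : nat)
  (I : (X -> R) -> R) (p : X -> 'I_K -> R)
  (ell : 'rV[R]_K -> 'I_K -> R) (g : X -> 'rV[R]_K) : R :=
  E_joint I p (fun x y => ell (g x) y).

Definition comp_term (X : Type) (R : realFieldType) (K c : nat) (gamma : R)
  (ell : 'rV[R]_K -> 'I_K -> R) (g : X -> 'rV[R]_K)
  (x : X) (Y : {set 'I_K}) : R :=
  (1 - gamma) * cum_loss ell (g x)
  - ((K.-1)%:R / c%:R) * \sum_(y in Y) ell (g x) y.

Definition unbiased_risk (X : Type) (R : realFieldType) (K c : nat)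
  (I : (X -> R) -> R) (p : X -> 'I_K -> R) (pbar : X -> {set 'I_K} -> R)
  (gamma : R) (ell : 'rV[R]_K -> 'I_K -> R) (g : X -> 'rV[R]_K) : R :=
  E_comp c I pbar (comp_term c gamma ell g)
  + gamma * E_marg I p (fun x => cum_loss ell (g x)).

(* Everything happens pointwise in x.  If the true label is y and Y is a
   uniformly drawn c-subset avoiding y, every other label lies in Y with
   probability C(K-2, c-1) / C(K-1, c) = c / (K-1); hence the expectation of
   (K-1)/c * sum_(y' in Y) l(y') is L - l(y), where L is the cumulative loss.
   The integrand of the complementary part thus averages to l(y) - gamma L,
   and the gamma-weighted ordinary part restores l(y). *)

From HB Require Import structures.
From mathcomp Require Import all_boot all_order all_algebra zify ring.
From Stdlib Require Import FunctionalExtensionality.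
Import Order.TTheory GRing.Theory Num.Theory.
Set Implicit Arguments.
Unset Strict Implicit.
Unset Printing Implicit Defensive.
Local Open Scope ring_scope.

Section CountingDraws.
Variable T : finType.

Lemma card_draws_notin (y : T) (c : nat) :
  #|[set Y : {set T} | #|Y| == c & y \notin Y]| = 'C(#|T|.-1, c).
Proof.
rewrite -(cardsC1 y) -cards_draws; apply: eq_card => Y.
by rewrite !inE subsetC sub1set !inE andbC.
Qed.

Lemma card_draws_notin_in (y y' : T) (c : nat) : y != y' -> (0 < c)%N ->
  #|[set Y : {set T} | #|Y| == c & (y \notin Y) && (y' \in Y)]|
    = 'C(#|T|.-2, c.-1).
Proof.
move=> neq_yy' c_gt0.
pose avoid (A : {set T}) := [set Y : {set T} | Y \subset ~: A & #|Y| == c].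
have avoid_sub : avoid [set y; y'] \subset avoid [set y].
  apply/subsetP => Y; rewrite !inE => /andP[sYC ->]; rewrite andbT.
  by apply: subset_trans sYC _; rewrite setCS sub1set !inE eqxx.
have -> : [set Y : {set T} | #|Y| == c & (y \notin Y) && (y' \in Y)]
          = avoid [set y] :\: avoid [set y; y'].
  apply/setP => Y; rewrite !inE (subsetC Y [set y]) (subsetC Y [set y; y']).
  rewrite subUset !sub1set !inE.
  by case: (#|Y| == c); case: (y \in Y); case: (y' \in Y).
rewrite cardsD (setIidPr avoid_sub) !cards_draws cardsC1.
have := cardsC [set y; y']; rewrite cards2 neq_yy' => cardT.
have -> : #|~: [set y; y']| = #|T|.-2 by lia.
have : (2 <= #|T|)%N by lia.
clear avoid_sub avoid cardT.
case: #|T| => [|[|n]] // _; case: c c_gt0 => [|c] // _.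
by rewrite /= binS addKn.
Qed.

End CountingDraws.

Section SumsOverDraws.
Variables (R : pzRingType) (T : finType).

Lemma sum_draws_sum_notin (P : T -> R) (c : nat) :
  \sum_(Y : {set T} | #|Y| == c) \sum_(y | y \notin Y) P y
    = (\sum_y P y) *+ 'C(#|T|.-1, c).
Proof.
rewrite (exchange_big_dep xpredT) //= -sumrMnl; apply: eq_bigr => y _.
rewrite sumr_const -(card_draws_notin y c); congr (_ *+ _).
by apply: eq_card => Y; rewrite !inE.
Qed.

Lemma sum_draws_mul_notin_in (P l : T -> R) (c : nat) : (0 < c)%N ->
  \sum_(Y : {set T} | #|Y| == c) (\sum_(y | y \notin Y) P y) * (\sum_(y in Y) l y)
    = ((\sum_y P y) * (\sum_y l y) - \sum_y P y * l y) *+ 'C(#|T|.-2, c.-1).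
Proof.
move=> c_gt0.
under eq_bigr => Y _ do rewrite big_distrlr /=.
rewrite (exchange_big_dep xpredT) //= mulr_suml -sumrB -sumrMnl.
apply: eq_bigr => y _.
rewrite (exchange_big_dep xpredT) //= mulr_sumr (bigD1 y) //=.
rewrite [X in _ = (X - _) *+ _](bigD1 y) //= addrAC subrr add0r.
rewrite big1 ?add0r => [|Y]; last by case: (y \in Y); rewrite ?andbF.
rewrite -sumrMnl; apply: eq_bigr => y' neq_y'y.
have neq_yy' : y != y' by rewrite eq_sym.
rewrite sumr_const -(card_draws_notin_in neq_yy' c_gt0); congr (_ *+ _).
by apply: eq_card => Y; rewrite !inE andbA.
Qed.

End SumsOverDraws.

Lemma sum_draws_unbiased (R : numFieldType) (T : finType) (c : nat)
    (P l : T -> R) (pb : {set T} -> R) (gamma : R) :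
  (0 < c)%N -> (c <= #|T|.-1)%N ->
  (forall Y : {set T}, #|Y| = c ->
     pb Y = ('C(#|T|.-1, c)%:R)^-1 * \sum_(y | y \notin Y) P y) ->
  \sum_(Y : {set T} | #|Y| == c)
     pb Y * ((1 - gamma) * (\sum_y l y) - ((#|T|.-1)%:R / c%:R) * \sum_(y in Y) l y)
  + gamma * ((\sum_y P y) * \sum_y l y) = \sum_y P y * l y.
Proof.
move=> c_gt0 c_le pb_def.
set a := (#|T|.-1)%:R / c%:R.
have bin_neq0 : ('C(#|T|.-1, c)%:R : R) != 0 by rewrite pnatr_eq0 -lt0n bin_gt0.
have c_neq0 : (c%:R : R) != 0 by rewrite pnatr_eq0 -lt0n.
have a_bin : a * 'C(#|T|.-2, c.-1)%:R = 'C(#|T|.-1, c)%:R.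
  have := mul_bin_diag #|T|.-1 c.-1; rewrite prednK // => /(congr1 (GRing.natmul (1 : R))).
  by rewrite !natrM /a mulrAC => ->; rewrite mulrC mulKf.
rewrite (eq_bigr (fun Y : {set T} => ('C(#|T|.-1, c)%:R)^-1 *
  ((\sum_(y | y \notin Y) P y) * ((1 - gamma) * \sum_y l y)
   - a * ((\sum_(y | y \notin Y) P y) * \sum_(y in Y) l y)))); last first.
  by move=> Y /eqP/pb_def ->; ring.
rewrite -mulr_sumr sumrB -mulr_suml -mulr_sumr.
rewrite sum_draws_sum_notin sum_draws_mul_notin_in //.
rewrite -[(\sum_y P y) *+ _]mulr_natr -[(_ - _) *+ _]mulr_natr -a_bin.
rewrite -a_bin in bin_neq0.
field.
by move: bin_neq0; rewrite mulf_eq0 negb_or andbC.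
Qed.

Theorem lemma2 (R : realFieldType) (X : Type) (K c : nat)
  (integrable : (X -> R) -> Prop) (I : (X -> R) -> R)
  (p : X -> 'I_K -> R) (pbar : X -> {set 'I_K} -> R)
  (gamma : R) (ell : 'rV[R]_K -> 'I_K -> R) (g : X -> 'rV[R]_K) :
  (2 <= K)%N -> (1 <= c)%N -> (c <= K.-1)%N ->
  linear_integral integrable I ->
  (forall x y, 0 <= p x y) ->
  integrable (marginal p) -> I (marginal p) = 1 ->
  (forall x (Y : {set 'I_K}), #|Y| = c ->
     pbar x Y = ('C(K.-1, c)%:R)^-1 * \sum_(y < K | y \notin Y) p x y) ->
  0 <= gamma <= 1 ->
  (forall v y, 0 <= ell v y) ->
  integrable (fun x => \sum_(y < K) p x y * ell (g x) y) ->
  integrable (fun x => \sum_(Y : {set 'I_K} | #|Y| == c)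
                         pbar x Y * comp_term c gamma ell g x Y) ->
  integrable (fun x => marginal p x * cum_loss ell (g x)) ->
  unbiased_risk c I p pbar gamma ell g = risk I p ell g.
Proof.
move=> _ c_gt0 c_le [_ integrableZ integralD integralZ] _ _ _ pbar_def _ _ _ int_comp int_marg.
rewrite /unbiased_risk /E_comp /E_marg /risk /E_joint.
rewrite -integralZ // -integralD //; last exact: integrableZ.
congr (I _); apply: functional_extensionality => x.
have := sum_draws_unbiased (P := p x) (pb := pbar x) (ell (g x)) gamma c_gt0.
by rewrite card_ord => /(_ c_le (pbar_def x)).
Qed.
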